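(* Let $q=p^k$ with $p$ prime, $Q_q=\mathrm{GF}(q)$, $Q_{q^2}=Q_q\times Q_q$, and $n\ge2$. Let $r(x_1,\dots,x_n)=\sum_{i,j=1}^n\alpha_{ij}x_ix_j+\sum_{i=1}^n\beta_i(x_i)$ with $\alpha_{ij}\in\mathrm{GF}(q)$ and arbitrary functions $\beta_i:Q_q\to Q_q$. Let $M\subseteq Q_{q^2}^n$ be the set of $((x_1,y_1),\dots,(x_n,y_n))$ satisfying $\sum_{i=1}^n x_i=0$ and $\sum_{i=1}^n y_i+r(x_1,\dots,x_n)=0$. Then $M$ is a topolinear MDS code.
   Context: An MDS code (code distance 2) of length $n$ over an alphabet of size $Q$ is a set $M\subseteq Q_Q^n$ with $|M|=Q^{n-1}$ and any two distinct elements at Hamming distance at least $2$. An isotopism of $Q_{Q}^n$ is a map $\overline{x}\mapsto(\tau_1x_1,\dots,\tau_nx_n)$ with $\tau_i$ permutations of the alphabet; $M$ is topolinear if the group of isotopisms mapping $M$ onto $M$ contains a subgroup of cardinality $|M|$ acting transitively on $M$. *)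

From HB Require Import structures.
From mathcomp Require Import all_boot all_order all_algebra all_fingroup all_field.
Set Implicit Arguments. Unset Strict Implicit. Unset Printing Implicit Defensive.
Import GRing.Theory.

Definition word (A : finType) (n : nat) := {ffun 'I_n -> A}.

Definition hamming (A : finType) (n : nat) (x y : word A n) : nat :=
  #|[set i : 'I_n | x i != y i]|.

(* MDS code with code distance 2: |M| = |A|^(n-1), pairwise distance >= 2. *)
Definition MDS_code (A : finType) (n : nat) (M : {set word A n}) : Prop :=
  #|M| = (#|A| ^ n.-1)%N /\
  (forall x y, x \in M -> y \in M -> x != y -> (2 <= hamming x y)%N).

Definition isotopism (A : finType) (n : nat) := {ffun 'I_n -> {perm A}}.

Definition iso_apply (A : finType) (n : nat) (t : isotopism A n) (x : word A n)
  : word A n := [ffun i => t i (x i)].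

Definition iso_id (A : finType) (n : nat) : isotopism A n := [ffun _ => 1%g].
Definition iso_mul (A : finType) (n : nat) (s t : isotopism A n) : isotopism A n :=
  [ffun i => (s i * t i)%g].
Definition iso_inv (A : finType) (n : nat) (t : isotopism A n) : isotopism A n :=
  [ffun i => (t i)^-1%g].

Definition iso_subgroup (A : finType) (n : nat) (G : {set isotopism A n}) : Prop :=
  iso_id A n \in G /\
  (forall s t, s \in G -> t \in G -> iso_mul s t \in G) /\
  (forall t, t \in G -> iso_inv t \in G).

Definition topolinear (A : finType) (n : nat) (M : {set word A n}) : Prop :=
  exists G : {set isotopism A n},
    iso_subgroup G /\
    (forall t, t \in G -> [set iso_apply t x | x in M] = M) /\
    #|G| = #|M| /\
    (forall x y, x \in M -> y \in M -> exists2 t, t \in G & iso_apply t x = y).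

Definition code_M (F : finFieldType) (n : nat) (alpha : 'I_n -> 'I_n -> F)
  (beta : 'I_n -> F -> F) : {set word (F * F)%type n} :=
  [set z : word (F * F)%type n |
     ((\sum_(i < n) (z i).1 == 0)%R) &&
     (\sum_(i < n) (z i).2
        + (\sum_(i < n) \sum_(j < n) alpha i j * (z i).1 * (z j).1
           + \sum_(i < n) beta i (z i).1) == 0)%R].

(* For ANY function R of x = (x_i)_i, the "twisted code"
   { sum_i x_i = 0, sum_i y_i + R(x) = 0 } is the graph of a function over
   each coordinate j: the letter (x_j, y_j) is forced by the other letters.
   A set of words that is such a graph over every coordinate has |A|^(n-1)
   elements and two distinct members never differ in a single position.

   Topolinearity.  (1) The isotopism (x_i, y_i) |-> (x_i, y_i + beta_i(x_i))
   maps M onto the code M_0 twisted by the quadratic form q alone, and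
   topolinearity transfers along isotopisms by conjugating the group.
   (2) For u in M_0 let T_u act on letter i by
   (x, y) |-> (x + a_i, y + b_i - c_i x), where u_i = (a_i, b_i) and c is the
   polar form of q evaluated at a.  Then T_u maps the zero word to u, keeps
   M_0 invariant (Taylor expansion of q) and T_u o T_v = T_(T_u v).  Any such
   family of isotopisms indexed by a set containing a base point acts
   regularly on it, so {T_u | u in M_0} witnesses topolinearity. *)

From HB Require Import structures.
From mathcomp Require Import all_boot all_order all_algebra all_fingroup all_field.
From mathcomp Require Import ring.
Set Implicit Arguments. Unset Strict Implicit. Unset Printing Implicit Defensive.
Import GRing.Theory.

(* Elementary algebra of isotopisms, read through their action on words;
   note that iso_mul s t applies s first. *)
Section Isotopisms.
Variables (A : finType) (n : nat).
Implicit Types (s t : isotopism A n) (x : word A n).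

Lemma iso_applyM s t x : iso_apply (iso_mul s t) x = iso_apply t (iso_apply s x).
Proof. by apply/ffunP => i; rewrite !ffunE permM. Qed.

Lemma iso_apply1 x : iso_apply (iso_id A n) x = x.
Proof. by apply/ffunP => i; rewrite !ffunE perm1. Qed.

Lemma iso_applyK t : cancel (iso_apply t) (iso_apply (iso_inv t)).
Proof. by move=> x; apply/ffunP => i; rewrite !ffunE permK. Qed.

Lemma iso_applyVK t : cancel (iso_apply (iso_inv t)) (iso_apply t).
Proof. by move=> x; apply/ffunP => i; rewrite !ffunE permKV. Qed.

Lemma iso_apply_inj t : injective (iso_apply t).
Proof. exact: can_inj (iso_applyK t). Qed.

Lemma iso_ext s t : iso_apply s =1 iso_apply t -> s = t.
Proof.
move=> eq_st; apply/ffunP => i; apply/permP => a.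
by have := congr1 (fun x : word A n => x i) (eq_st [ffun=> a]); rewrite !ffunE.
Qed.

Lemma iso_apply_onto t (M : {set word A n}) :
  {in M, forall x, iso_apply t x \in M} -> [set iso_apply t x | x in M] = M.
Proof.
move=> tM; apply/eqP; rewrite eqEcard card_imset ?leqnn ?andbT; last exact: iso_apply_inj.
by apply/subsetP => _ /imsetP[x xM ->]; apply: tM.
Qed.

End Isotopisms.

Section RegularAction.
Variables (A : finType) (n : nat) (M : {set word A n}) (o : word A n).
Variable T : word A n -> isotopism A n.
Hypothesis oM : o \in M.
Hypothesis T_base : {in M, forall u, iso_apply (T u) o = u}.
Hypothesis T_stable : {in M &, forall u z, iso_apply (T u) z \in M}.
Hypothesis T_comp :
  {in M &, forall u v, iso_mul (T v) (T u) = T (iso_apply (T u) v)}.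

(* T o is idempotent, hence the identity. *)
Lemma T_base_id : T o = iso_id A n.
Proof.
have idem : iso_mul (T o) (T o) = T o by rewrite T_comp ?T_base.
apply: iso_ext => x; rewrite iso_apply1; apply: (@iso_apply_inj _ _ (T o)).
by rewrite -iso_applyM idem.
Qed.

(* The inverse of T u is T v for the v in M that T u sends to o. *)
Lemma T_invE u : u \in M -> exists2 v, v \in M & iso_inv (T u) = T v.
Proof.
move=> uM; have : o \in [set iso_apply (T u) z | z in M].
  by rewrite iso_apply_onto // => z; apply: T_stable.
case/imsetP=> v vM ov; exists v => //.
apply: iso_ext => x; apply: (@iso_apply_inj _ _ (T u)).
by rewrite iso_applyVK -iso_applyM T_comp // -ov T_base_id iso_apply1.
Qed.

Lemma topolinear_of_regular : topolinear M.
Proof.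
have T_inj : {in M &, injective T}.
  by move=> u v uM vM eqT; rewrite -(T_base uM) -(T_base vM) eqT.
have mulG : forall u v, u \in M -> v \in M -> iso_mul (T u) (T v) \in T @: M.
  by move=> u v uM vM; rewrite T_comp ?imset_f ?T_stable.
exists (T @: M); split; [split; [|split] | split; [|split]].
- by rewrite -T_base_id imset_f.
- by move=> _ _ /imsetP[u uM ->] /imsetP[v vM ->]; apply: mulG.
- by move=> _ /imsetP[u uM ->]; have [v vM ->] := T_invE uM; apply: imset_f.
- by move=> _ /imsetP[u uM ->]; apply: iso_apply_onto => z; apply: T_stable.
- exact: card_in_imset.
move=> x y xM yM; have [v vM Tv] := T_invE xM.
exists (iso_mul (T v) (T y)); first exact: mulG.
by rewrite iso_applyM -Tv -[X in iso_apply (iso_inv _) X](T_base xM) iso_applyK T_base.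
Qed.

End RegularAction.

(* Topolinearity is invariant under isotopisms: if psi maps exactly the words
   of M into M0, conjugating by psi turns a group for M0 into one for M. *)
Section Transport.
Variables (A : finType) (n : nat) (M M0 : {set word A n}) (psi : isotopism A n).
Hypothesis psiM : forall z, (iso_apply psi z \in M0) = (z \in M).

Definition conj_iso (t : isotopism A n) : isotopism A n :=
  iso_mul (iso_mul psi t) (iso_inv psi).

Lemma conj_isoE t x :
  iso_apply (conj_iso t) x = iso_apply (iso_inv psi) (iso_apply t (iso_apply psi x)).
Proof. by rewrite !iso_applyM. Qed.

Lemma conj_iso_inj : injective conj_iso.
Proof.
move=> s t eq_st; apply: iso_ext => x.
have := congr1 (fun g => iso_apply g (iso_apply (iso_inv psi) x)) eq_st.
by rewrite !conj_isoE !iso_applyVK => /iso_apply_inj.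
Qed.

Lemma card_transport : #|M0| = #|M|.
Proof.
rewrite -[RHS](card_imset _ (@iso_apply_inj _ _ psi)); apply: eq_card => z.
apply/idP/imsetP => [zM0|[w wM ->]]; last by rewrite psiM.
by exists (iso_apply (iso_inv psi) z); rewrite ?iso_applyVK // -psiM iso_applyVK.
Qed.

Lemma topolinear_transport : topolinear M0 -> topolinear M.
Proof.
move=> [G0 [[G0_1 [G0_mul G0_inv]] [G0_stab [G0_card G0_trans]]]].
have G0_map t z : t \in G0 -> z \in M -> iso_apply t (iso_apply psi z) \in M0.
  by move=> tG0 zM; rewrite -(G0_stab t tG0) imset_f ?psiM.
exists (conj_iso @: G0); split; [split; [|split] | split; [|split]].
- have -> : iso_id A n = conj_iso (iso_id A n).
    by apply: iso_ext => x; rewrite conj_isoE !iso_apply1 iso_applyK.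
  exact: imset_f.
- move=> _ _ /imsetP[s sG0 ->] /imsetP[t tG0 ->].
  have -> : iso_mul (conj_iso s) (conj_iso t) = conj_iso (iso_mul s t).
    by apply: iso_ext => x; rewrite iso_applyM !conj_isoE iso_applyVK iso_applyM.
  by apply: imset_f; apply: G0_mul.
- move=> _ /imsetP[t tG0 ->].
  have -> : iso_inv (conj_iso t) = conj_iso (iso_inv t).
    apply: iso_ext => x; apply: (@iso_apply_inj _ _ (conj_iso t)).
    by rewrite iso_applyVK !conj_isoE !iso_applyVK iso_applyK.
  by apply: imset_f; apply: G0_inv.
- move=> _ /imsetP[t tG0 ->]; apply: iso_apply_onto => z zM.
  by rewrite -psiM conj_isoE iso_applyVK G0_map.
- by rewrite card_imset; [rewrite G0_card card_transport | exact: conj_iso_inj].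
move=> x y; rewrite -!psiM => xM0 yM0; have [t tG0 txy] := G0_trans _ _ xM0 yM0.
exists (conj_iso t); first exact: imset_f.
by rewrite conj_isoE txy iso_applyK.
Qed.

End Transport.

Section GraphCodes.
Variables (A : finType) (n : nat).

Definition upd (z : word A n) (j : 'I_n) (v : A) : word A n :=
  [ffun i => if i == j then v else z i].

Lemma upd_upd z j v w : upd (upd z j v) j w = upd z j w.
Proof. by apply/ffunP => i; rewrite !ffunE; case: eqP. Qed.

Lemma upd_id z j : upd z j (z j) = z.
Proof. by apply/ffunP => i; rewrite !ffunE; case: eqP => [->|]. Qed.

Lemma card_fixed_letter j a : #|[set z : word A n | z j == a]| = (#|A| ^ n.-1)%N.
Proof.
pose P i : pred A := if i == j then pred1 a else predT.
have -> : #|[set z : word A n | z j == a]| = #|(family P : simpl_pred (word A n))|.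
  apply: eq_card => z; rewrite inE; apply/idP/familyP => [/eqP zj i|zP].
    by rewrite /P; case: eqP => [->|//]; rewrite inE zj.
  by have := zP j; rewrite /P eqxx.
rewrite card_family foldrE big_map big_enum /= (bigD1 j) //= /P eqxx card1 mul1n.
rewrite (eq_bigr (fun => #|A|)); last by move=> i /negbTE ->; apply: eq_card.
by rewrite prod_nat_const cardC1 card_ord.
Qed.

Variables (M : {set word A n}) (h : 'I_n -> word A n -> A).
Hypothesis M_graph : forall j z, (z \in M) = (z j == h j z).
Hypothesis h_upd : forall j z v, h j (upd z j v) = h j z.

Lemma graph_agree (j : 'I_n) (x y : word A n) :
  x \in M -> y \in M -> (forall i, i != j -> x i = y i) -> x = y.
Proof.
rewrite !(M_graph j) => /eqP xj /eqP yj xy.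
have ex : x = upd y j (x j).
  by apply/ffunP => i; rewrite ffunE; case: eqVneq => [->|/xy].
apply/ffunP => i; case: (eqVneq i j) => [->|/xy //].
by rewrite xj yj [in LHS]ex h_upd.
Qed.

(* Erasing the j-th letter is a bijection from M onto the words with a
   fixed j-th letter. *)
Lemma card_graph (j : 'I_n) (a : A) : #|M| = (#|A| ^ n.-1)%N.
Proof.
rewrite -(card_fixed_letter j a).
have erase_inj : {in M &, injective (fun z => upd z j a)}.
  move=> x y xM yM /ffunP xy; apply: (graph_agree (j := j) xM yM) => i ij.
  by have := xy i; rewrite !ffunE (negbTE ij).
rewrite -(card_in_imset erase_inj); apply: eq_card => w; rewrite inE.
apply/imsetP/idP => [[z _ ->]|/eqP wj]; first by rewrite ffunE eqxx.
exists (upd w j (h j w)); first by rewrite (M_graph j) ffunE eqxx h_upd.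
by rewrite upd_upd -wj upd_id.
Qed.

Lemma graph_MDS (j : 'I_n) (a : A) : MDS_code M.
Proof.
split; first exact: card_graph j a.
move=> x y xM yM neq_xy; rewrite /hamming leqNgt.
apply/negP => /card_le1_eqP D_le1.
have [i xyi] : exists i, x i != y i.
  apply/existsP; apply: contraNT neq_xy; rewrite negb_exists => /forallP agree.
  by apply/eqP/ffunP => i; apply/eqP/negPn/agree.
apply: (negP neq_xy); apply/eqP; apply: (graph_agree (j := i) xM yM) => i' i'i.
apply/eqP; apply: contraNT i'i => xyi'; apply/eqP.
by apply: D_le1; rewrite inE.
Qed.

End GraphCodes.

Local Open Scope ring_scope.

Section TwistedCodes.
Variables (F : finZmodType) (n : nat).
Implicit Types (R : {ffun 'I_n -> F} -> F) (z : word (F * F)%type n).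

Definition fst_word z : {ffun 'I_n -> F} := [ffun i => (z i).1].

Definition twisted_code R : {set word (F * F)%type n} :=
  [set z : word (F * F)%type n |
     (\sum_i (z i).1 == 0) && (\sum_i (z i).2 + R (fst_word z) == 0)].

Definition forced_letter R (j : 'I_n) z : F * F :=
  let s := - \sum_(i | i != j) (z i).1 in
  (s, - (\sum_(i | i != j) (z i).2 + R (fst_word (upd z j (s, 0))))).

Lemma twisted_code_graph R j z :
  (z \in twisted_code R) = (z j == forced_letter R j z).
Proof.
rewrite inE /forced_letter (bigD1 j) //= [\sum_i (z i).2](bigD1 j) //=.
case zj: (z j) => [x y]; rewrite xpair_eqE /= addr_eq0.
have [<- /=|//] := eqVneq x; rewrite -addrA addr_eq0.
suff -> : fst_word (upd z j (x, 0)) = fst_word z by [].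
by apply/ffunP => i; rewrite !ffunE; case: eqP => [->|]; rewrite ?zj.
Qed.

Lemma forced_letter_upd R j z v : forced_letter R j (upd z j v) = forced_letter R j z.
Proof.
have off_j i : i != j -> upd z j v i = z i by rewrite ffunE => /negbTE ->.
have sum_x : \sum_(i | i != j) (upd z j v i).1 = \sum_(i | i != j) (z i).1.
  by apply: eq_bigr => i /off_j ->.
have sum_y : \sum_(i | i != j) (upd z j v i).2 = \sum_(i | i != j) (z i).2.
  by apply: eq_bigr => i /off_j ->.
by rewrite /forced_letter sum_x sum_y upd_upd.
Qed.

Lemma twisted_code_MDS R : (0 < n)%N -> MDS_code (twisted_code R).
Proof.
move=> n_gt0.
exact: graph_MDS (@twisted_code_graph R) (@forced_letter_upd R) (Ordinal n_gt0) (0, 0).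
Qed.

Definition shift_letter (b : F -> F) (p : F * F) : F * F := (p.1, p.2 + b p.1).

Lemma shift_letter_inj b : injective (shift_letter b).
Proof. by move=> [x y] [x' y'] [/= <-] /addIr ->. Qed.

Definition shift_iso (beta : 'I_n -> F -> F) : isotopism (F * F)%type n :=
  [ffun i => perm (@shift_letter_inj (beta i))].

Lemma shift_iso_code R beta z :
  (iso_apply (shift_iso beta) z \in twisted_code R) =
  (z \in twisted_code (fun x => R x + \sum_i beta i (x i))).
Proof.
have shiftE i : iso_apply (shift_iso beta) z i = ((z i).1, (z i).2 + beta i (z i).1).
  by rewrite !ffunE permE.
have fst_shift : fst_word (iso_apply (shift_iso beta) z) = fst_word z.
  by apply/ffunP => i; rewrite !ffunE permE.
rewrite !inE fst_shift (eq_bigr _ (fun i _ => congr1 fst (shiftE i))).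
rewrite (eq_bigr _ (fun i _ => congr1 snd (shiftE i))) /=.
rewrite big_split /= -addrA [_ + R _]addrC.
by congr (_ && (_ + (_ + _) == 0)); apply: eq_bigr => i _; rewrite ffunE.
Qed.

End TwistedCodes.

Section QuadraticCode.
Variables (F : finComNzRingType) (n : nat) (alpha : 'I_n -> 'I_n -> F).
Implicit Types (x a : {ffun 'I_n -> F}) (u v z : word (F * F)%type n).

Definition quad x : F := \sum_i \sum_j alpha i j * x i * x j.
Definition polar a : {ffun 'I_n -> F} :=
  [ffun i => \sum_j (alpha i j + alpha j i) * a j].

Lemma polarD a b : polar (a + b) = polar a + polar b.
Proof.
apply/ffunP => i; rewrite !ffunE -big_split.
by apply: eq_bigr => j _; rewrite !ffunE mulrDr.
Qed.

Lemma quadD x a : quad (x + a) = quad x + \sum_i polar a i * x i + quad a.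
Proof.
have cross : \sum_i polar a i * x i =
    \sum_i \sum_j (alpha i j * x i * a j + alpha i j * a i * x j).
  rewrite [RHS](eq_bigr _ (fun i _ => big_split _ _ _ _ _)) big_split /=.
  rewrite [X in _ = _ + X]exchange_big.
  rewrite -big_split; apply: eq_bigr => i _ /=.
  by rewrite ffunE big_distrl -big_split; apply: eq_bigr => j _ /=; ring.
rewrite cross /quad -!big_split; apply: eq_bigr => i _ /=.
by rewrite -!big_split; apply: eq_bigr => j _ /=; rewrite !ffunE; ring.
Qed.

Definition affine_letter (c : F) (q p : F * F) : F * F :=
  (p.1 + q.1, p.2 + q.2 - c * p.1).

Lemma affine_letter_inj c q : injective (affine_letter c q).
Proof. by move=> [x y] [x' y'] [/= /addIr <-] /addIr /addIr ->. Qed.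

Definition translation u : isotopism (F * F)%type n :=
  [ffun i => perm (@affine_letter_inj (polar (fst_word u) i) (u i))].

Lemma translationE u z i :
  iso_apply (translation u) z i = affine_letter (polar (fst_word u) i) (u i) (z i).
Proof. by rewrite !ffunE permE. Qed.

Lemma fst_translation u z :
  fst_word (iso_apply (translation u) z) = fst_word z + fst_word u.
Proof. by apply/ffunP => i; rewrite !ffunE permE. Qed.

Definition zero_word : word (F * F)%type n := [ffun=> (0, 0)].

Lemma translation_zero u : iso_apply (translation u) zero_word = u.
Proof.
apply/ffunP => i; rewrite translationE !ffunE /affine_letter /=.
by rewrite mulr0 subr0 !add0r -surjective_pairing.
Qed.

Lemma translation_comp u v :
  iso_mul (translation v) (translation u) = translation (iso_apply (translation u) v).
Proof.
apply: iso_ext => z; apply/ffunP => i; rewrite iso_applyM !translationE.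
rewrite fst_translation polarD !ffunE /affine_letter /=; congr pair; ring.
Qed.

Lemma zero_word_code : zero_word \in twisted_code quad.
Proof.
have quad0 : quad (fst_word zero_word) = 0.
  by rewrite /quad big1 // => i _; rewrite big1 // => j _; rewrite !ffunE mulr0.
by rewrite inE quad0 addr0 !big1 ?eqxx // => i _; rewrite ffunE.
Qed.

(* Translations by codewords preserve the code: the cross term of the Taylor
   expansion of quad cancels the correction - c x of the second letters. *)
Lemma translation_code u z : u \in twisted_code quad -> z \in twisted_code quad ->
  iso_apply (translation u) z \in twisted_code quad.
Proof.
rewrite !inE fst_translation quadD => /andP[/eqP u1 /eqP u2] /andP[/eqP z1 /eqP z2].
rewrite (eq_bigr _ (fun i _ => congr1 fst (translationE u z i))).
rewrite (eq_bigr _ (fun i _ => congr1 snd (translationE u z i))) /=.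
rewrite !big_split /= sumrN z1 u1 addr0 eqxx /=.
set cross := \sum_i _ * (z i).1.
have -> : \sum_i polar (fst_word u) i * fst_word z i = cross.
  by apply: eq_bigr => i _; rewrite [fst_word z i]ffunE.
have -> : \sum_i (z i).2 + \sum_i (u i).2 - cross
    + (quad (fst_word z) + cross + quad (fst_word u))
  = (\sum_i (z i).2 + quad (fst_word z)) + (\sum_i (u i).2 + quad (fst_word u)) by ring.
by rewrite z2 u2 addr0.
Qed.

Lemma quad_code_topolinear : topolinear (twisted_code quad).
Proof.
apply: (@topolinear_of_regular _ _ _ zero_word translation zero_word_code).
- by move=> u _; apply: translation_zero.
- by move=> u z; apply: translation_code.
- by move=> u v _ _; apply: translation_comp.
Qed.

End QuadraticCode.

Theorem theorem2 (p k : nat) (F : finFieldType) (hp : prime p)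
  (hF : #|F| = (p ^ k)%N) (n : nat) (hn : (2 <= n)%N)
  (alpha : 'I_n -> 'I_n -> F) (beta : 'I_n -> F -> F) :
  MDS_code (code_M alpha beta) /\ topolinear (code_M alpha beta).
Proof.
have -> : code_M alpha beta =
    twisted_code (fun x => quad alpha x + \sum_i beta i (x i)).
  apply/setP => z; rewrite !inE; congr (_ && (_ + (_ + _) == 0)).
    by apply: eq_bigr => i _; apply: eq_bigr => j _; rewrite !ffunE.
  by apply: eq_bigr => i _; rewrite ffunE.
split; first by apply: twisted_code_MDS; apply: leq_trans hn.
apply: (topolinear_transport (psi := shift_iso beta)) (quad_code_topolinear alpha).
exact: shift_iso_code.
Qed.
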